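(* Let $k=2$. For every word $x_0\in\Sigma_2^*$ with $x_0\neq 111$, the sequence $x_{n+1}=\mathcal P_2(x_n)$ is eventually constant equal to $1001110$, i.e. there is $N$ with $x_n=1001110$ for all $n\ge N$; and for $x_0=111$ the sequence is constant equal to $111$. In particular, the only fixed points of $\mathcal P_2$ are $111$ and $1001110$, and $\mathcal P_2$ has no cycles of length $p\ge 2$.
   Context: Fix an integer $k\ge 2$ and the alphabet $\Sigma_k=\{0,1,\dots,k-1\}$. A word is a finite nonempty string of letters of $\Sigma_k$ (leading zeros allowed); $\Sigma_k^*$ denotes the set of words. For a word $x$, $|x|$ denotes its length and $|x|_i$ the number of occurrences of the letter $i$ in $x$. For a positive integer $c$, $[c]_k$ denotes its standard base-$k$ representation without leading zeros, viewed as a word over $\Sigma_k$; it has $\lfloor\log_k c\rfloor+1$ letters. The map $\mathcal P_k:\Sigma_k^*\to\Sigma_k^*$ is defined as follows: if $b_1>b_2>\dots>b_r$ are exactly the letters occurring in $x$ (i.e. those with $|x|_{b_j}\neq 0$), then $\mathcal P_k(x)=[|x|_{b_1}]_k\,b_1\,[|x|_{b_2}]_k\,b_2\cdots[|x|_{b_r}]_k\,b_r$ (concatenation). For $k=2$, e.g. $\mathcal P_2(111)=111$ (three 1's, written $11$ in binary, followed by the letter $1$). A fixed point is a word $x$ with $\mathcal P_k(x)=x$; a cycle of length $p$ is a list of $p$ distinct words $\overline x_1,\dots,\overline x_p$ with $\mathcal P_k(\overline x_i)=\overline x_{i+1}$ for $i<p$ and $\mathcal P_k(\overline x_p)=\overline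 x_1$. *)

(* Words over Sigma_k are represented as seq nat whose
   letters are all < k (and nonempty). *)
From mathcomp Require Import all_boot.
Set Implicit Arguments. Unset Strict Implicit. Unset Printing Implicit Defensive.

Definition word (k : nat) (x : seq nat) : bool :=
  (0 < size x) && all (fun a => a < k) x.

Fixpoint digits_aux (fuel k c : nat) : seq nat :=
  match fuel with
  | 0 => [::]
  | f.+1 => if c == 0 then [::] else rcons (digits_aux f k (c %/ k)) (c %% k)
  end.

Definition digits (k c : nat) : seq nat := digits_aux c k c.

Definition occ_letters (k : nat) (x : seq nat) : seq nat :=
  [seq b <- rev (iota 0 k) | count_mem b x != 0].

Definition P (k : nat) (x : seq nat) : seq nat :=
  flatten [seq digits k (count_mem b x) ++ [:: b] | b <- occ_letters k x].

From mathcomp Require Import all_boot zify.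
Set Implicit Arguments.
Unset Strict Implicit.
Unset Printing Implicit Defensive.

(* P_2(x) depends only on the numbers a and b of 1's and 0's in x, and its
   length is at most |[a]_2| + |[b]_2| + 2, logarithmic in a + b = |x|.  Hence
   lengths strictly decrease down to at most 8, and the finitely many pairs
   (a, b) with a + b <= 8 are settled by computation.  Since every orbit ends
   in a fixed point, a periodic point must be that fixed point, which rules
   out fixed points other than 111, 1001110 and all longer cycles. *)

Notation w111 := [:: 1; 1; 1].
Notation w1001110 := [:: 1; 0; 0; 1; 1; 1; 0].

Section Dynamics.

Variables (T : Type) (f : T -> T).

Lemma iter_fix_ge x y N n : f y = y -> iter N f x = y -> N <= n -> iter n f x = y.
Proof. by move=> fy xNy /subnK <-; rewrite iterD xNy iter_fix. Qed.

Lemma periodic_reaching_fixed x y N m :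
  0 < m -> f y = y -> iter N f x = y -> iter m f x = x -> x = y.
Proof.
move=> m_gt0 fy xNy xm.
have x_periodic : iter (N * m) f x = x by rewrite iterM; elim: N {xNy} => //= N ->.
by rewrite -x_periodic (iter_fix_ge fy xNy) // leq_pmulr.
Qed.

Lemma cycle_iter x0 (xs : seq T) p : 0 < p ->
    (forall i, i < p -> f (nth x0 xs i) = nth x0 xs ((i + 1) %% p)) ->
  forall n, iter n f (nth x0 xs 0) = nth x0 xs (n %% p).
Proof.
move=> p_gt0 cyc; elim=> [|n IH]; first by rewrite mod0n.
by rewrite iterS IH cyc ?ltn_pmod // modnDml addn1.
Qed.

End Dynamics.

Definition undigits (k : nat) (s : seq nat) : nat :=
  foldl (fun acc d => acc * k + d) 0 s.

Section Digits.

Variable k : nat.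
Hypothesis k_gt1 : 1 < k.

Lemma digits_aux_digit fuel c : all (fun d => d < k) (digits_aux fuel k c).
Proof.
elim: fuel c => [|fuel IH] c //=; case: eqP => // _.
by rewrite all_rcons IH ltn_pmod ?(ltnW k_gt1).
Qed.

Lemma undigits_digits_aux fuel c : c <= fuel -> undigits k (digits_aux fuel k c) = c.
Proof.
elim: fuel c => [|fuel IH] c c_le /=; first by case: c c_le.
case: eqP => [-> //|c_neq0].
have c_div : c %/ k <= fuel.
  have : c %/ k < c by rewrite ltn_Pdiv // lt0n; apply/eqP.
  lia.
by rewrite /undigits foldl_rcons -/(undigits _ _) IH // -divn_eq.
Qed.

Lemma digitsK : cancel (digits k) (undigits k).
Proof. by move=> c; apply: undigits_digits_aux. Qed.

Lemma size_digits_aux fuel c : c <= fuel ->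
  size (digits_aux fuel k c) <= c %/ 2 + (c != 0).
Proof.
elim: fuel c => [|fuel IH] c c_le /=; first by lia.
case: eqP => [-> //|c_neq0]; rewrite size_rcons.
have c_div2 : c %/ k <= c %/ 2 by apply: leq_div2l.
have c_div : c %/ k <= fuel.
  have : c %/ k < c by rewrite ltn_Pdiv // lt0n; apply/eqP.
  lia.
have := IH _ c_div; case: (c %/ k =P 0) => [-> | ck_neq0] /=; lia.
Qed.

Lemma size_digits c : size (digits k c) <= c %/ 2 + 1.
Proof. by rewrite (leq_trans (size_digits_aux (leqnn c))) // leq_add2l leq_b1. Qed.

End Digits.

Definition binary (x : seq nat) : bool := all (fun a => a < 2) x.

Lemma count_mem10 x : binary x -> count_mem 1 x + count_mem 0 x = size x.
Proof.
elim: x => [|a x IH] //= /andP[a_lt2 x_bin]; rewrite -(IH x_bin).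
by case: a a_lt2 => [|[|]] //= _; lia.
Qed.

Lemma binary_count0 x : binary x -> count_mem 0 x = 0 -> x = nseq (size x) 1.
Proof.
elim: x => [|a x IH] //= /andP[a_lt2 x_bin].
by case: a a_lt2 => [|[|]] //= _ x_n0; rewrite -IH.
Qed.

Definition P2_counts (a b : nat) : seq nat :=
  (if a != 0 then digits 2 a ++ [:: 1] else [::]) ++
  (if b != 0 then digits 2 b ++ [:: 0] else [::]).

Lemma P2E x : P 2 x = P2_counts (count_mem 1 x) (count_mem 0 x).
Proof.
rewrite /P /occ_letters /P2_counts /=.
by case: (count_mem 1 x != 0); case: (count_mem 0 x != 0); rewrite /= ?cats0.
Qed.

Lemma binary_P2_counts a b : binary (P2_counts a b).
Proof.
rewrite /binary /P2_counts all_cat.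
by apply/andP; split; case: (_ != 0); rewrite //= all_cat digits_aux_digit.
Qed.

Lemma word_P2 x : word 2 x -> word 2 (P 2 x).
Proof.
move=> /andP[x_gt0 x_bin]; rewrite /word P2E.
apply/andP; split; last exact: binary_P2_counts.
have := count_mem10 x_bin; rewrite /P2_counts.
by case: (count_mem 1 x) => [|a]; case: (count_mem 0 x) => [|b];
  rewrite /= ?size_cat /=; lia.
Qed.

Lemma size_P2_lt x : word 2 x -> 9 <= size x -> size (P 2 x) < size x.
Proof.
move=> /andP[_ x_bin]; rewrite P2E -(count_mem10 x_bin) /P2_counts.
have := size_digits (ltnSn 1) (count_mem 1 x).
have := size_digits (ltnSn 1) (count_mem 0 x).
by case: (_ != 0); case: (_ != 0); rewrite /= ?size_cat /=; lia.
Qed.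

Lemma P2_eq111 x : word 2 x -> P 2 x = w111 -> x = w111.
Proof.
move=> /andP[_ x_bin]; rewrite P2E /P2_counts.
have [x_n0 | x_0] := eqVneq (count_mem 0 x) 0; last first.
  by move=> /(congr1 (last 0)); rewrite !last_cat.
rewrite /= cats0; case: (_ != 0) => //.
rewrite cats1 -[w111]/(rcons [:: 1; 1] 1) => /rcons_inj[digits_x].
have := digitsK (ltnSn 1) (count_mem 1 x); rewrite digits_x /= => x_1.
by rewrite (binary_count0 x_bin x_n0) -(count_mem10 x_bin) x_n0 -x_1.
Qed.

Lemma P2_111 : P 2 w111 = w111.
Proof. by vm_compute. Qed.

Lemma P2_1001110 : P 2 w1001110 = w1001110.
Proof. by vm_compute. Qed.

(* One step maps a word with a 1's and b 0's to P2_counts a b; the pairs with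
   a + b = 0 or (a, b) = (3, 0) correspond to the empty word and to 111. *)
Definition small_orbits_converge : bool :=
  all (fun a => all (fun b =>
      [|| a + b == 0, 8 < a + b, (a == 3) && (b == 0)
        | iter 9 (P 2) (P2_counts a b) == w1001110])
    (iota 0 9)) (iota 0 9).

Lemma small_orbits_convergeP : small_orbits_converge.
Proof. by vm_compute. Qed.

Lemma P2_reaches_small x : word 2 x -> x <> w111 -> size x <= 8 ->
  iter 10 (P 2) x = w1001110.
Proof.
move=> /andP[x_gt0 x_bin] x_n111 x_small; rewrite iterSr P2E.
have x_size := count_mem10 x_bin.
set a := count_mem 1 x in x_size *; set b := count_mem 0 x in x_size *.
have := small_orbits_convergeP => /allP/(_ a); rewrite mem_iota => /(_ ltac:(lia)).
move=> /allP/(_ b); rewrite mem_iota => /(_ ltac:(lia)).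
have not_111 : (a == 3) && (b == 0) = false.
  apply/negbTE/negP => /andP[/eqP a3 /eqP b0]; apply: x_n111.
  by rewrite (binary_count0 x_bin b0) -x_size a3 b0.
have -> : (a + b == 0) = false by apply/negbTE; lia.
have -> : (8 < a + b) = false by apply/negbTE; lia.
by rewrite not_111 => /eqP.
Qed.

Lemma P2_reaches x : word 2 x -> x <> w111 -> exists N, iter N (P 2) x = w1001110.
Proof.
have [n] := ubnP (size x); elim: n x => // n IH x x_lt wx x_n111.
have [x_small | x_big] := leqP (size x) 8.
  by exists 10; apply: P2_reaches_small.
have [|N xN] := IH (P 2 x) _ (word_P2 wx) (fun e => x_n111 (P2_eq111 wx e)).
  by have := size_P2_lt wx x_big; lia.
by exists N.+1; rewrite iterSr.
Qed.

Lemma P2_reaches_fixed x : word 2 x -> exists N y, P 2 y = y /\ iter N (P 2) x = y.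
Proof.
move=> wx; have [-> | x_n111] := eqVneq x w111.
  by exists 0, w111; split; first exact: P2_111.
have [N xN] := P2_reaches wx (elimN eqP x_n111).
by exists N, w1001110; split; first exact: P2_1001110.
Qed.

Theorem corollary1 :
  (* every orbit other than that of 111 is eventually constant 1001110 *)
  (forall x0 : seq nat, word 2 x0 -> x0 <> [:: 1; 1; 1] ->
     exists N : nat, forall n : nat, N <= n ->
       iter n (P 2) x0 = [:: 1; 0; 0; 1; 1; 1; 0]) /\
  (* the orbit of 111 is constant *)
  (forall n : nat, iter n (P 2) [:: 1; 1; 1] = [:: 1; 1; 1]) /\
  (* the only fixed points are 111 and 1001110 *)
  (forall x : seq nat, word 2 x ->
     (P 2 x = x <-> (x = [:: 1; 1; 1] \/ x = [:: 1; 0; 0; 1; 1; 1; 0]))) /\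
  (* no cycles of length p >= 2 *)
  (forall (p : nat) (xs : seq (seq nat)), 2 <= p -> size xs = p ->
     all (word 2) xs -> uniq xs ->
     (forall i : nat, i < p -> P 2 (nth [::] xs i) = nth [::] xs ((i + 1) %% p)) ->
     False).
Proof.
split; [|split; [|split]].
- move=> x0 wx0 x0_n111; have [N x0N] := P2_reaches wx0 x0_n111.
  by exists N => n; apply: iter_fix_ge P2_1001110 x0N.
- by move=> n; apply: iter_fix P2_111.
- move=> x wx; split=> [Px | [-> | ->]]; [|exact: P2_111|exact: P2_1001110].
  have [-> | x_n111] := eqVneq x w111; [by left | right].
  have [N xN] := P2_reaches wx (elimN eqP x_n111).
  exact: (periodic_reaching_fixed (m := 1) isT P2_1001110 xN Px).
- move=> p xs p_ge2 size_xs xs_words uniq_xs cyc.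
  have p_gt0 : 0 < p by lia.
  have orbit := cycle_iter p_gt0 cyc.
  have [|N [y [Py x0N]]] := P2_reaches_fixed (x := nth [::] xs 0).
    by apply: (allP xs_words); rewrite mem_nth // size_xs.
  have x0y : nth [::] xs 0 = y.
    by apply: (periodic_reaching_fixed p_gt0 Py x0N); rewrite orbit modnn.
  have := orbit 1; rewrite modn_small //= x0y Py -x0y => /eqP.
  by rewrite nth_uniq ?size_xs.
Qed.
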